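(* In the hyperbolic plane let $l=(MN)$ be a line (the axis) with terminals $M,N$ at infinity. Let $(AB)$ and $(CD)$ be two lines lying in different half-planes bounded by $l$, with terminals $A,B,C,D$ at infinity, such that $M,N,A,B$ are four consecutive points on the circle at infinity and $M,N,D,C$ are four consecutive points on it. Put $\theta_1=\theta(A,B)$, $\theta_2=\theta(D,C)$, $\theta_{12}=\theta(B,C)$. Let $\delta_1,\delta_2$ be vectors with $\delta_1^2=\delta_2^2=-2$ orthogonal to $(AB)$ and $(CD)$ respectively such that $l$ is contained in both $\mathcal H^+_{\delta_1}$ and $\mathcal H^+_{\delta_2}$. Then $$(\delta_1,\delta_2)=2\,\mathrm{ch}\,\rho=4\frac{\mathrm{ch}\frac{\theta_1+\theta_{12}}{2}\,\mathrm{ch}\frac{\theta_2-\theta_{12}}{2}}{\mathrm{sh}\frac{\theta_1}{2}\,\mathrm{sh}\frac{\theta_2}{2}}-2,$$ where $\rho$ is the distance between the lines $(AB)$ and $(CD)$.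
   Context: Let $V$ be a $3$-dimensional real vector space with a symmetric bilinear form of signature $(1,2)$; the hyperbolic plane is $\mathcal L=V^+/\mathbb R_{>0}$ ($V^+$ a component of $\{x^2>0\}$), curvature $-1$. Points at infinity are isotropic rays in the closure of $V^+$; they form a circle identified with the real projective line, with cross-ratio $[P,Q,R,S]=\frac{(t_R-t_P)(t_S-t_Q)}{(t_R-t_Q)(t_S-t_P)}$ in a projective coordinate $t$. For $\delta$ with $\delta^2<0$, $\mathcal H^+_\delta=\{\mathbb R_{>0}x:(x,\delta)\ge0\}$. For points $A,B$ at infinity in the same half-plane bounded by the axis $l=(MN)$, $\theta(A,B)=\ln[M,N,A,B]$. For a point $X$ at infinity not on $l$ let $X'$ be the other terminal of the line through $X$ orthogonal to $l$; for $A,B$ in different half-planes bounded by $l$, $\theta(A,B)=\theta(A,B')$. *)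

From Stdlib Require Import Reals.
Open Scope R_scope.

(** Model: V = R^3 with the form x0 y0 - x1 y1 - x2 y2 (signature (1,2)),
    V^+ = the component {x^2 > 0, x0 > 0}. *)
Record vec := mkV { v0 : R; v1 : R; v2 : R }.

Definition bil (x y : vec) : R := v0 x * v0 y - v1 x * v1 y - v2 x * v2 y.
Definition sq (x : vec) : R := bil x x.

Definition vadd (x y : vec) : vec := mkV (v0 x + v0 y) (v1 x + v1 y) (v2 x + v2 y).
Definition vscale (k : R) (x : vec) : vec := mkV (k * v0 x) (k * v1 x) (k * v2 x).

(** x represents a point of the hyperbolic plane (a ray in V^+). *)
Definition in_Vplus (x : vec) : Prop := sq x > 0 /\ v0 x > 0.

(** x represents a point at infinity: a (nonzero) isotropic vector in the
    closure of V^+. *)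
Definition ideal (x : vec) : Prop := sq x = 0 /\ v0 x > 0.

Definition on_line (p q x : vec) : Prop :=
  in_Vplus x /\ exists al be : R, x = vadd (vscale al p) (vscale be q).

Definition in_Hplus (delta x : vec) : Prop := bil x delta >= 0.

Definition line_in_Hplus (delta p q : vec) : Prop :=
  forall x, on_line p q x -> in_Hplus delta x.

Definition orth_to_line (delta p q : vec) : Prop :=
  bil delta p = 0 /\ bil delta q = 0.

(** Projective (homogeneous) coordinate on the circle at infinity, coming from
    the parametrisation x = (u^2+v^2, 2uv, u^2-v^2) of the isotropic cone;
    the affine projective coordinate is t = u/v. *)
Definition hcoord (x : vec) : R * R :=
  if Req_EM_T (v0 x - v2 x) 0 then (v0 x + v2 x, v1 x) else (v1 x, v0 x - v2 x).

Definition det2 (p q : R * R) : R := fst p * snd q - fst q * snd p.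

(** Cross-ratio [P,Q,R,S] = (t_R-t_P)(t_S-t_Q)/((t_R-t_Q)(t_S-t_P)),
    written homogeneously (so that the point t = infinity is allowed). *)
Definition cross_ratio (P Q R' S : vec) : R :=
  let p := hcoord P in let q := hcoord Q in
  let r := hcoord R' in let s := hcoord S in
  (det2 r p * det2 s q) / (det2 r q * det2 s p).

Definition theta (M N A B : vec) : R := ln (cross_ratio M N A B).

Definition at_angle (x : vec) (phi : R) : Prop :=
  v1 x = v0 x * cos phi /\ v2 x = v0 x * sin phi.

Definition consecutive4 (P Q R' S : vec) : Prop :=
  exists p q r s : R,
    at_angle P p /\ at_angle Q q /\ at_angle R' r /\ at_angle S s /\
    ((p < q /\ q < r /\ r < s /\ s < p + 2 * PI) \/
     (p > q /\ q > r /\ r > s /\ s > p - 2 * PI)).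

Definition lines_orth (p q r s : vec) : Prop :=
  exists n1 n2 : vec, n1 <> mkV 0 0 0 /\ n2 <> mkV 0 0 0 /\
    orth_to_line n1 p q /\ orth_to_line n2 r s /\ bil n1 n2 = 0.

Definition other_terminal_orth (M N X X' : vec) : Prop :=
  ideal X' /\ (forall k : R, X' <> vscale k X) /\ lines_orth X X' M N.

Definition hdist_is (x y : vec) (d : R) : Prop :=
  0 <= d /\ cosh d = bil x y / sqrt (sq x * sq y).

Definition lines_dist_is (a b c d : vec) (rho : R) : Prop :=
  (exists x y, on_line a b x /\ on_line c d y /\ hdist_is x y rho) /\
  (forall x y r, on_line a b x -> on_line c d y -> hdist_is x y r -> rho <= r).

From Stdlib Require Import Reals Lra Psatz.
Open Scope R_scope.

(* Write points at infinity as [mu (u^2+v^2, 2uv, u^2-v^2)] and use the affine coordinate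
   t(X) = [X,N]/[M,X] of the circle at infinity, [.,.] the determinant of homogeneous
   coordinates, so that N is 0 and M is infinity.  Then [M,N,X,Y] = t(Y)/t(X), the half-planes
   bounded by l are the signs of t, and the reflection in l is t -> -t, so t(C') = -t(C).
   The unit normal of the line with ends X, Y is a multiple of the polar vector of (X, Y), and
   the half-plane conditions on delta_1, delta_2 fix the signs, giving
     (delta_1, delta_2) = 2 (1 + 2 (t_A - t_D)(t_B - t_C) / ((t_A - t_B)(t_C - t_D))),
   which becomes the stated expression after substituting t_B = e^theta_1 t_A,
   t_C = -e^theta_12 t_B, t_C = e^theta_2 t_D.  Finally (delta_1, delta_2) = 2 ch rho: the
   common perpendicular meets the lines at delta_2 + ch rho delta_1 and delta_1 + ch rho delta_2,
   and the reverse Cauchy-Schwarz inequality shows that no pair of points is closer. *)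

Lemma vec_ext (x y : vec) : v0 x = v0 y -> v1 x = v1 y -> v2 x = v2 y -> x = y.
Proof. destruct x, y; simpl; intros -> -> ->; reflexivity. Qed.

Lemma bil_sym (x y : vec) : bil x y = bil y x.
Proof. unfold bil; ring. Qed.

Lemma bil_scale_l (k : R) (x y : vec) : bil (vscale k x) y = k * bil x y.
Proof. unfold bil, vscale; simpl; ring. Qed.

Lemma bil_scale_r (k : R) (x y : vec) : bil x (vscale k y) = k * bil x y.
Proof. unfold bil, vscale; simpl; ring. Qed.

Lemma bil_add_l (x y z : vec) : bil (vadd x y) z = bil x z + bil y z.
Proof. unfold bil, vadd; simpl; ring. Qed.

Lemma bil_add_r (x y z : vec) : bil z (vadd x y) = bil z x + bil z y.
Proof. unfold bil, vadd; simpl; ring. Qed.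

Lemma sq_scale (k : R) (x : vec) : sq (vscale k x) = k ^ 2 * sq x.
Proof. unfold sq; rewrite bil_scale_l, bil_scale_r; ring. Qed.

Lemma pow2_pos (x : R) : x <> 0 -> 0 < x ^ 2.
Proof. intros Hx; rewrite <- Rsqr_pow2; apply Rsqr_pos_lt, Hx. Qed.

Lemma vscale_inj_eq (d : R) (z w : vec) : d <> 0 -> vscale d z = w -> z = vscale (/ d) w.
Proof.
  intros Hd <-; apply vec_ext; unfold vscale; simpl; field; exact Hd.
Qed.

(* In signature (1,2) the orthogonal complement of a timelike vector is spacelike. *)
Lemma reverse_cauchy_schwarz (x y : vec) : sq x > 0 -> bil x y ^ 2 >= sq x * sq y.
Proof.
  unfold sq, bil; destruct x as [x0 x1 x2], y as [y0 y1 y2]; simpl; intros Hx.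
  set (z1 := x0 * y1 - y0 * x1); set (z2 := x0 * y2 - y0 * x2); set (w := x1 * y2 - x2 * y1).
  assert (Lagrange : (x0 * y0 - x1 * y1 - x2 * y2) ^ 2
                     - (x0 * x0 - x1 * x1 - x2 * x2) * (y0 * y0 - y1 * y1 - y2 * y2)
                     = z1 * z1 + z2 * z2 - w * w) by (unfold z1, z2, w; ring).
  assert (Scaled : x0 * x0 * (z1 * z1 + z2 * z2 - w * w)
               = (x0 * x0 - (x1 * x1 + x2 * x2)) * (z1 * z1 + z2 * z2) + (x1 * z1 + x2 * z2) ^ 2)
    by (unfold z1, z2, w; ring).
  assert (0 <= (x0 * x0 - (x1 * x1 + x2 * x2)) * (z1 * z1 + z2 * z2)) by (apply Rmult_le_pos; nra).
  assert (0 <= (x1 * z1 + x2 * z2) ^ 2) by apply pow2_ge_0.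
  nra.
Qed.

Lemma bil_Vplus_pos (x y : vec) : in_Vplus x -> in_Vplus y -> bil x y > 0.
Proof.
  unfold in_Vplus, sq, bil; destruct x as [x0 x1 x2], y as [y0 y1 y2]; simpl.
  intros [Hx Hx0] [Hy Hy0].
  assert (CS : (x1 * y1 + x2 * y2) ^ 2 <= (x1 * x1 + x2 * x2) * (y1 * y1 + y2 * y2))
    by (assert (0 <= (x1 * y2 - x2 * y1) ^ 2) by apply pow2_ge_0; nra).
  assert ((x1 * x1 + x2 * x2) * (y1 * y1 + y2 * y2) < (x0 * y0) ^ 2).
  { assert (0 <= x1 * x1 + x2 * x2) by nra.
    replace ((x0 * y0) ^ 2) with (x0 * x0 * (y0 * y0)) by ring.
    apply Rle_lt_trans with ((x1 * x1 + x2 * x2) * (y0 * y0)); [apply Rmult_le_compat_l; lra|].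
    apply Rmult_lt_compat_r; nra. }
  assert (0 < x0 * y0) by nra.
  destruct (Rle_lt_dec (x1 * y1 + x2 * y2) (x0 * y0)) as [Hle | Hgt]; [|nra].
  destruct Hle; [lra | nra].
Qed.

Lemma on_line_orth (delta a b x : vec) :
  orth_to_line delta a b -> on_line a b x -> bil x delta = 0.
Proof.
  intros [Ha Hb] [_ (al & be & ->)].
  rewrite bil_add_l, !bil_scale_l, (bil_sym a), (bil_sym b), Ha, Hb; ring.
Qed.

(* [null_vec (u, v)] is the isotropic vector with projective coordinate [u/v], the
   parametrisation that [hcoord] inverts up to a positive factor; [polar_vec h k] is the
   pole of the line joining [null_vec h] and [null_vec k]. *)
Definition null_vec (h : R * R) : vec :=
  mkV (fst h * fst h + snd h * snd h) (2 * fst h * snd h) (fst h * fst h - snd h * snd h).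

Definition polar_vec (h k : R * R) : vec :=
  mkV (fst h * fst k + snd h * snd k) (fst h * snd k + snd h * fst k)
      (fst h * fst k - snd h * snd k).

Lemma det2_anti (h k : R * R) : det2 h k = - det2 k h.
Proof. unfold det2; ring. Qed.

Lemma det2_plucker (hm hn hx hy : R * R) :
  det2 hx hy * det2 hm hn = det2 hm hy * det2 hx hn - det2 hm hx * det2 hy hn.
Proof. unfold det2; ring. Qed.

Lemma bil_null_null (h k : R * R) : bil (null_vec h) (null_vec k) = 2 * det2 h k ^ 2.
Proof. unfold bil, null_vec, det2; simpl; ring. Qed.

Lemma bil_null_polar (l h k : R * R) :
  bil (null_vec l) (polar_vec h k) = 2 * det2 h l * det2 k l.
Proof. unfold bil, null_vec, polar_vec, det2; simpl; ring. Qed.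

Lemma bil_polar_polar (h k l m : R * R) :
  bil (polar_vec h k) (polar_vec l m) = det2 h l * det2 k m + det2 h m * det2 k l.
Proof. unfold bil, polar_vec, det2; simpl; ring. Qed.

Lemma sq_polar (h k : R * R) : sq (polar_vec h k) = - det2 h k ^ 2.
Proof. unfold sq, bil, polar_vec, det2; simpl; ring. Qed.

Lemma null_polar_decomposition (w : vec) (h k : R * R) :
  vscale (det2 h k ^ 2) w =
  vadd (vadd (vscale (bil w (null_vec k) / 2) (null_vec h))
             (vscale (bil w (null_vec h) / 2) (null_vec k)))
       (vscale (- bil w (polar_vec h k)) (polar_vec h k)).
Proof. apply vec_ext; unfold vscale, vadd, bil, null_vec, polar_vec, det2; simpl; field. Qed.

Lemma orth_nulls_polar (z : vec) (h k : R * R) :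
  bil z (null_vec h) = 0 -> bil z (null_vec k) = 0 -> det2 h k <> 0 ->
  exists l, z = vscale l (polar_vec h k).
Proof.
  intros Hh Hk Hd.
  pose proof (null_polar_decomposition z h k) as E; rewrite Hh, Hk in E.
  apply vscale_inj_eq in E; [|apply pow_nonzero; exact Hd].
  exists (/ det2 h k ^ 2 * - bil z (polar_vec h k)); rewrite E at 1.
  apply vec_ext; unfold vscale, vadd; simpl; field; exact Hd.
Qed.

Lemma orth_polar_span (z : vec) (h k : R * R) :
  bil z (polar_vec h k) = 0 -> det2 h k <> 0 ->
  exists al be, z = vadd (vscale al (null_vec h)) (vscale be (null_vec k)).
Proof.
  intros Hz Hd.
  pose proof (null_polar_decomposition z h k) as E; rewrite Hz in E.
  apply vscale_inj_eq in E; [|apply pow_nonzero; exact Hd].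
  exists (/ det2 h k ^ 2 * (bil z (null_vec k) / 2)), (/ det2 h k ^ 2 * (bil z (null_vec h) / 2)).
  rewrite E at 1; apply vec_ext; unfold vscale, vadd; simpl; field; exact Hd.
Qed.

Lemma ideal_null_vec (x : vec) :
  ideal x -> exists mu, 0 < mu /\ x = vscale mu (null_vec (hcoord x)).
Proof.
  unfold ideal, sq, bil, hcoord; destruct x as [x0 x1 x2]; simpl; intros [Hiso Hpos].
  destruct (Req_EM_T (x0 - x2) 0) as [E | E].
  - assert (x2 = x0) by lra; subst x2.
    assert (x1 = 0) by nra; subst x1.
    exists (/ (4 * x0)); split; [apply Rinv_0_lt_compat; lra|].
    apply vec_ext; unfold vscale, null_vec; simpl; field; lra.
  - assert (x0 - x2 > 0) by nra.
    exists (/ (2 * (x0 - x2))); split; [apply Rinv_0_lt_compat; lra|].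
    assert (Hx1 : x1 * x1 = x0 * x0 - x2 * x2) by lra.
    apply vec_ext; unfold vscale, null_vec; simpl; rewrite ?Hx1; field; lra.
Qed.

Lemma hcoord_neq0 (x : vec) : ideal x -> hcoord x <> (0, 0).
Proof.
  intros Hx E; destruct (ideal_null_vec x Hx) as (mu & _ & Ex).
  destruct Hx as [_ Hpos]; rewrite Ex, E in Hpos.
  unfold vscale, null_vec in Hpos; simpl in Hpos; lra.
Qed.

Lemma det2_eq0_null_vec (h k : R * R) :
  det2 h k = 0 -> h <> (0, 0) -> exists r, null_vec k = vscale (r ^ 2) (null_vec h).
Proof.
  destruct h as [p q], k as [p' q']; unfold det2; simpl; intros Hd Hh.
  destruct (Req_dec p 0) as [-> | Hp].
  - assert (Hq : q <> 0) by (intros ->; apply Hh; reflexivity).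
    assert (p' = 0) by (apply (Rmult_eq_reg_r q); [lra | exact Hq]); subst p'.
    exists (q' / q); apply vec_ext; unfold null_vec, vscale; simpl; field; exact Hq.
  - assert (q' = p' * q / p) by (apply (Rmult_eq_reg_l p); [field_simplify; lra | exact Hp]).
    subst q'; exists (p' / p); apply vec_ext; unfold null_vec, vscale; simpl; field; exact Hp.
Qed.

Lemma det2_eq0_both (hm hn k : R * R) :
  det2 hm k = 0 -> det2 k hn = 0 -> det2 hm hn <> 0 -> k = (0, 0).
Proof.
  destruct hm as [a1 a2], hn as [b1 b2], k as [k1 k2]; unfold det2; simpl; intros H1 H2 H3.
  assert (E1 : (a1 * b2 - b1 * a2) * k1 = (k1 * b2 - b1 * k2) * a1 + (a1 * k2 - k1 * a2) * b1) by ring.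
  assert (E2 : (a1 * b2 - b1 * a2) * k2 = (k1 * b2 - b1 * k2) * a2 + (a1 * k2 - k1 * a2) * b2) by ring.
  rewrite H1, H2 in E1, E2.
  f_equal; apply (Rmult_eq_reg_l (a1 * b2 - b1 * a2)); lra.
Qed.

Definition hdet (x y : vec) : R := det2 (hcoord x) (hcoord y).

Lemma hdet_anti (x y : vec) : hdet x y = - hdet y x.
Proof. apply det2_anti. Qed.

Lemma hdet_eq0_collinear (x y : vec) :
  ideal x -> ideal y -> hdet x y = 0 -> exists k, y = vscale k x.
Proof.
  intros Hx Hy Hd.
  destruct (det2_eq0_null_vec _ _ Hd (hcoord_neq0 x Hx)) as (r & Er).
  destruct (ideal_null_vec x Hx) as (mx & Hmx & Ex).
  destruct (ideal_null_vec y Hy) as (my & _ & Ey).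
  exists (my * r ^ 2 / mx); rewrite Ey, Er.
  set (hx := hcoord x) in *; clearbody hx; subst x.
  apply vec_ext; unfold vscale; simpl; field; lra.
Qed.

Lemma bil_ideal_pos (x y : vec) : ideal x -> ideal y -> hdet x y <> 0 -> bil x y > 0.
Proof.
  intros Hx Hy Hd.
  destruct (ideal_null_vec x Hx) as (mx & Hmx & Ex).
  destruct (ideal_null_vec y Hy) as (my & Hmy & Ey).
  rewrite Ex, Ey, bil_scale_l, bil_scale_r, bil_null_null; fold (hdet x y).
  assert (0 < hdet x y ^ 2) by (apply pow2_pos, Hd).
  apply Rmult_lt_0_compat; [lra|]; apply Rmult_lt_0_compat; lra.
Qed.

Lemma bil_ideal_polar (x : vec) (h k : R * R) : ideal x ->
  exists mu, 0 < mu /\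
    bil x (polar_vec h k) = 2 * mu * det2 h (hcoord x) * det2 k (hcoord x).
Proof.
  intros Hx; destruct (ideal_null_vec x Hx) as (mu & Hmu & Ex).
  exists mu; split; [exact Hmu|].
  rewrite Ex at 1; rewrite bil_scale_l, bil_null_polar; ring.
Qed.

Lemma orth_ideals_polar (z a b : vec) :
  ideal a -> ideal b -> hdet a b <> 0 -> orth_to_line z a b ->
  exists l, z = vscale l (polar_vec (hcoord a) (hcoord b)).
Proof.
  intros Ha Hb Hab [Hza Hzb]; apply orth_nulls_polar; [| |exact Hab].
  - destruct (ideal_null_vec a Ha) as (mu & Hmu & Ea).
    rewrite Ea, bil_scale_r in Hza; apply Rmult_integral in Hza as [|]; lra.
  - destruct (ideal_null_vec b Hb) as (mu & Hmu & Eb).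
    rewrite Eb, bil_scale_r in Hzb; apply Rmult_integral in Hzb as [|]; lra.
Qed.

Lemma unit_normal_polar (a b delta : vec) :
  ideal a -> ideal b -> hdet a b <> 0 -> sq delta = -2 -> orth_to_line delta a b ->
  exists l, delta = vscale l (polar_vec (hcoord a) (hcoord b)) /\ (l * hdet a b) ^ 2 = 2.
Proof.
  intros Ha Hb Hab Hsq Horth.
  destruct (orth_ideals_polar delta a b Ha Hb Hab Horth) as (l & El).
  exists l; split; [exact El|].
  rewrite El, sq_scale, sq_polar in Hsq; unfold hdet; lra.
Qed.

Lemma on_line_of_orth (a b delta f : vec) :
  ideal a -> ideal b -> hdet a b <> 0 -> orth_to_line delta a b -> delta <> mkV 0 0 0 ->
  bil f delta = 0 -> sq f > 0 -> exists s, on_line a b (vscale s f).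
Proof.
  intros Ha Hb Hab Hdelta Hnz Hf Hsq.
  destruct (orth_ideals_polar delta a b Ha Hb Hab Hdelta) as (l & El).
  assert (Hl : l <> 0) by (intros ->; apply Hnz; rewrite El; apply vec_ext; simpl; ring).
  rewrite El, bil_scale_r in Hf; apply Rmult_integral in Hf as [|Hf]; [contradiction|].
  destruct (orth_polar_span f _ _ Hf Hab) as (al & be & Ef).
  destruct (ideal_null_vec a Ha) as (ma & Hma & Ea).
  destruct (ideal_null_vec b Hb) as (mb & Hmb & Eb).
  assert (Hf0 : v0 f <> 0) by (intros E; unfold sq, bil in Hsq; rewrite E in Hsq; nra).
  assert (Hs : exists s, s * s = 1 /\ s * v0 f > 0).
  { destruct (Rlt_or_le 0 (v0 f)); [exists 1 | exists (-1)]; split; lra. }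
  destruct Hs as (s & Hs1 & Hs0).
  exists s; split.
  - split; [rewrite sq_scale; simpl; nra | exact Hs0].
  - exists (s * al / ma), (s * be / mb).
    set (ha := hcoord a) in *; set (hb := hcoord b) in *; clearbody ha hb.
    rewrite Ef, Ea, Eb; apply vec_ext; unfold vscale, vadd; simpl; field; lra.
Qed.

Lemma on_line_pos_comb (p q : vec) (al be : R) :
  ideal p -> ideal q -> bil p q > 0 -> 0 < al -> 0 < be ->
  on_line p q (vadd (vscale al p) (vscale be q)).
Proof.
  intros [Hp Hp0] [Hq Hq0] Hpq Hal Hbe; split; [split | eauto].
  - unfold sq in *; rewrite !bil_add_l, !bil_add_r, !bil_scale_l, !bil_scale_r, Hp, Hq, (bil_sym q p).
    assert (0 < al * be * bil p q) by (apply Rmult_lt_0_compat; [apply Rmult_lt_0_compat|]; lra).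
    lra.
  - unfold vadd, vscale; simpl; nra.
Qed.

(* Points [p + e q] of the line tend to the terminal [p] as [e -> 0+]. *)
Lemma line_in_Hplus_terminal (delta p q : vec) :
  ideal p -> ideal q -> bil p q > 0 -> line_in_Hplus delta p q -> bil p delta >= 0.
Proof.
  intros Hp Hq Hpq H.
  destruct (Rge_or_gt (bil p delta) 0) as [|Hneg]; [assumption | exfalso].
  set (e := - bil p delta / (2 * (Rabs (bil q delta) + 1))).
  assert (Habs : 0 <= Rabs (bil q delta)) by apply Rabs_pos.
  assert (He : 0 < e) by (apply Rdiv_lt_0_compat; lra).
  specialize (H _ (on_line_pos_comb p q 1 e Hp Hq Hpq Rlt_0_1 He)).
  unfold in_Hplus in H; rewrite bil_add_l, !bil_scale_l in H.
  assert (e * bil q delta <= e * Rabs (bil q delta))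
    by (apply Rmult_le_compat_l; [lra | apply Rle_abs]).
  assert (e * Rabs (bil q delta) < - bil p delta / 2).
  { unfold e; apply (Rmult_lt_reg_r (2 * (Rabs (bil q delta) + 1))); [lra|].
    field_simplify; lra. }
  lra.
Qed.

Lemma cosh_increasing (r1 r2 : R) : 0 <= r1 -> r1 < r2 -> cosh r1 < cosh r2.
Proof.
  intros H1 H12; unfold cosh; rewrite !exp_Ropp.
  assert (E1 : 1 <= exp r1) by (rewrite <- exp_0; destruct H1 as [H1 | <-];
                                [left; apply exp_increasing, H1 | lra]).
  assert (E12 : exp r1 < exp r2) by (apply exp_increasing, H12).
  set (u := exp r1) in *; set (v := exp r2) in *.
  assert (/ u - / v = (v - u) / (u * v)) by (field; lra).
  assert ((v - u) / (u * v) < v - u).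
  { apply (Rmult_lt_reg_r (u * v)); [nra|].
    unfold Rdiv; rewrite Rmult_assoc, Rinv_l by nra.
    assert (0 < (v - u) * (u * v - 1)) by (apply Rmult_lt_0_compat; nra).
    nra. }
  lra.
Qed.

Lemma acosh_exists (C : R) : 1 < C -> exists r, 0 < r /\ cosh r = C.
Proof.
  intros HC.
  assert (Hs : 0 <= sqrt (C ^ 2 - 1)) by apply sqrt_pos.
  assert (Hss : sqrt (C ^ 2 - 1) * sqrt (C ^ 2 - 1) = C ^ 2 - 1) by (apply sqrt_sqrt; nra).
  exists (ln (C + sqrt (C ^ 2 - 1))); split.
  - rewrite <- ln_1; apply ln_increasing; lra.
  - unfold cosh; rewrite exp_Ropp, exp_ln by lra.
    assert (Inv : / (C + sqrt (C ^ 2 - 1)) = C - sqrt (C ^ 2 - 1)).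
    { apply (Rmult_eq_reg_l (C + sqrt (C ^ 2 - 1))); [|lra]; rewrite Rinv_r by lra.
      replace ((C + sqrt (C ^ 2 - 1)) * (C - sqrt (C ^ 2 - 1)))
        with (C ^ 2 - sqrt (C ^ 2 - 1) * sqrt (C ^ 2 - 1)) by ring; lra. }
    rewrite Inv; field.
Qed.

(* Reverse Cauchy-Schwarz twice: for [y] against the projection [x + (x,d2)/2 d2] of [x]
   orthogonally to [d2], and for [x] against [d2 + C d1], whose square is [2 (C^2 - 1)]. *)
Lemma hdist_lower_bound (d1 d2 x y : vec) (C : R) :
  sq d1 = -2 -> sq d2 = -2 -> bil d1 d2 = 2 * C -> 1 < C ->
  in_Vplus x -> in_Vplus y -> bil x d1 = 0 -> bil y d2 = 0 ->
  C <= bil x y / sqrt (sq x * sq y).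
Proof.
  intros S1 S2 E12 HC Hx Hy O1 O2.
  assert (Pxy : bil x y > 0) by (apply bil_Vplus_pos; assumption).
  pose proof (reverse_cauchy_schwarz y (vadd x (vscale (bil x d2 / 2) d2)) (proj1 Hy)) as R1.
  pose proof (reverse_cauchy_schwarz x (vadd d2 (vscale C d1)) (proj1 Hx)) as R2.
  destruct Hx as [Hx _], Hy as [Hy _]; unfold sq in *.
  rewrite ?bil_add_l, ?bil_add_r, ?bil_scale_l, ?bil_scale_r in R1, R2.
  rewrite O2, (bil_sym d2 x), (bil_sym y x), S2 in R1.
  rewrite O1, S1, S2, (bil_sym d2 d1), E12 in R2.
  set (X := bil x x) in *; set (Y := bil y y) in *; set (b := bil x y) in *;
    set (e := bil x d2) in *.
  assert (B1 : b ^ 2 >= Y * (X + e ^ 2 / 2)) by (ring_simplify in R1; ring_simplify; lra).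
  assert (B2 : e ^ 2 >= X * (2 * C ^ 2 - 2)) by (ring_simplify in R2; ring_simplify; lra).
  assert (B : C ^ 2 * (X * Y) <= b ^ 2) by nra.
  assert (Hsqrt : sqrt (C ^ 2 * (X * Y)) <= b).
  { rewrite <- (sqrt_pow2 b) by lra; apply sqrt_le_1_alt, B. }
  rewrite sqrt_mult_alt, sqrt_pow2 in Hsqrt by nra.
  assert (0 < sqrt (X * Y)) by (apply sqrt_lt_R0; nra).
  apply (Rmult_le_reg_r (sqrt (X * Y))); [assumption|].
  unfold Rdiv; rewrite Rmult_assoc, Rinv_l by lra; lra.
Qed.

Lemma hdist_common_perpendicular (d1 d2 : vec) (C s s' : R) :
  sq d1 = -2 -> sq d2 = -2 -> bil d1 d2 = 2 * C -> 1 < C ->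
  let x := vscale s (vadd d2 (vscale C d1)) in
  let y := vscale s' (vadd d1 (vscale C d2)) in
  in_Vplus x -> in_Vplus y -> bil x y / sqrt (sq x * sq y) = C.
Proof.
  intros S1 S2 E12 HC x y Hx Hy.
  pose proof (bil_Vplus_pos x y Hx Hy) as Pxy.
  unfold sq in S1, S2.
  assert (Exy : bil x y = s * s' * (2 * C * (C ^ 2 - 1))).
  { unfold x, y; rewrite ?bil_scale_l, ?bil_scale_r, ?bil_add_l, ?bil_add_r, ?bil_scale_l,
      ?bil_scale_r, ?(bil_sym d2 d1), S1, S2, E12; ring. }
  assert (Exx : sq x = s ^ 2 * (2 * C ^ 2 - 2)).
  { unfold x, sq; rewrite ?bil_scale_l, ?bil_scale_r, ?bil_add_l, ?bil_add_r, ?bil_scale_l,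
      ?bil_scale_r, ?(bil_sym d2 d1), S1, S2, E12; ring. }
  assert (Eyy : sq y = s' ^ 2 * (2 * C ^ 2 - 2)).
  { unfold y, sq; rewrite ?bil_scale_l, ?bil_scale_r, ?bil_add_l, ?bil_add_r, ?bil_scale_l,
      ?bil_scale_r, ?(bil_sym d2 d1), S1, S2, E12; ring. }
  rewrite Exy in Pxy |- *; rewrite Exx, Eyy.
  assert (0 < 2 * C * (C ^ 2 - 1)) by nra.
  assert (Hss : s * s' > 0) by (destruct (Rle_lt_dec (s * s') 0); nra).
  replace (s ^ 2 * (2 * C ^ 2 - 2) * (s' ^ 2 * (2 * C ^ 2 - 2)))
    with ((s * s' * (2 * C ^ 2 - 2)) ^ 2) by ring.
  rewrite sqrt_pow2 by nra.
  field; split; nra.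
Qed.

Lemma lines_dist_of_unit_normals (a b c d d1 d2 : vec) (rho : R) :
  ideal a -> ideal b -> ideal c -> ideal d -> hdet a b <> 0 -> hdet c d <> 0 ->
  sq d1 = -2 -> sq d2 = -2 -> orth_to_line d1 a b -> orth_to_line d2 c d ->
  0 < rho -> bil d1 d2 = 2 * cosh rho -> lines_dist_is a b c d rho.
Proof.
  intros Ha Hb Hc Hd Hab Hcd S1 S2 O1 O2 Hrho E12.
  assert (HC : 1 < cosh rho) by (rewrite <- cosh_0; apply cosh_increasing; lra).
  assert (Hnz : forall v, sq v = -2 -> v <> mkV 0 0 0)
    by (intros v Hv ->; unfold sq, bil in Hv; simpl in Hv; lra).
  split.
  - set (C := cosh rho) in *.
    assert (Sq : forall v w, sq v = -2 -> sq w = -2 -> bil v w = 2 * C ->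
                   bil (vadd w (vscale C v)) v = 0 /\ sq (vadd w (vscale C v)) > 0).
    { intros v w Sv Sw Evw; unfold sq in *.
      rewrite !bil_add_l, !bil_add_r, !bil_scale_l, !bil_scale_r, (bil_sym w v), Sv, Sw, Evw.
      split; nra. }
    destruct (Sq d1 d2 S1 S2 E12) as [Of Sf].
    destruct (Sq d2 d1 S2 S1 ltac:(rewrite bil_sym; exact E12)) as [Og Sg].
    destruct (on_line_of_orth a b d1 _ Ha Hb Hab O1 (Hnz d1 S1) Of Sf) as (s & Lx).
    destruct (on_line_of_orth c d d2 _ Hc Hd Hcd O2 (Hnz d2 S2) Og Sg) as (s' & Ly).
    exists (vscale s (vadd d2 (vscale C d1))), (vscale s' (vadd d1 (vscale C d2))).
    do 2 (split; [assumption|]); split; [lra|].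
    symmetry; apply hdist_common_perpendicular; [assumption.. | apply Lx | apply Ly].
  - intros x y r Lx Ly [Hr Er].
    destruct (Rle_lt_dec rho r) as [|Hlt]; [assumption | exfalso].
    pose proof (hdist_lower_bound d1 d2 x y (cosh rho) S1 S2 E12 HC (proj1 Lx) (proj1 Ly)
                  (on_line_orth _ _ _ _ O1 Lx) (on_line_orth _ _ _ _ O2 Ly)).
    pose proof (cosh_increasing r rho Hr Hlt); lra.
Qed.

Definition pscale (l : R) (h : R * R) : R * R := (l * fst h, l * snd h).

Lemma det2_pscale (l l' : R) (h k : R * R) :
  det2 (pscale l h) (pscale l' k) = l * l' * det2 h k.
Proof. unfold det2, pscale; simpl; ring. Qed.

Definition angle_coord (phi : R) : R * R := (sin (phi / 2 + PI / 4), cos (phi / 2 + PI / 4)).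

Lemma det2_angle_coord (p q : R) : det2 (angle_coord p) (angle_coord q) = sin ((p - q) / 2).
Proof.
  unfold det2, angle_coord; simpl.
  replace ((p - q) / 2) with ((p / 2 + PI / 4) - (q / 2 + PI / 4)) by field.
  rewrite sin_minus; ring.
Qed.

Lemma hcoord_at_angle (x : vec) (phi : R) :
  ideal x -> at_angle x phi -> exists l, l <> 0 /\ hcoord x = pscale l (angle_coord phi).
Proof.
  intros [_ Hpos] [E1 E2]; unfold pscale, angle_coord; simpl.
  set (be := phi / 2 + PI / 4) in *.
  assert (Hphi : phi = - (PI / 2 - 2 * be)) by (unfold be; field).
  assert (Hc : cos phi = 2 * sin be * cos be) by (rewrite Hphi, cos_neg, cos_shift, sin_2a; ring).
  assert (Hs : sin phi = sin be * sin be - cos be * cos be)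
    by (rewrite Hphi, sin_neg, sin_shift, cos_2a; ring).
  assert (Hsc : sin be * sin be + cos be * cos be = 1)
    by (pose proof (sin2_cos2 be); unfold Rsqr in *; lra).
  rewrite Hc in E1; rewrite Hs in E2; clearbody be.
  unfold hcoord; destruct (Req_EM_T (v0 x - v2 x) 0) as [E | E].
  - assert (Hcos : cos be = 0).
    { assert (Hcos2 : v0 x * (cos be * cos be) = 0) by nra.
      apply Rmult_integral in Hcos2 as [|]; nra. }
    rewrite Hcos in *.
    exists (2 * v0 x * sin be); split; [intros Z; nra | f_equal; [nra | rewrite E1; ring]].
  - exists (2 * v0 x * cos be); split; [intros Z; nra | f_equal; [rewrite E1; ring | nra]].
Qed.

Lemma det2_cyclic_cross_gt1 (gm gn ga gb : R * R) (e : R) :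
  0 < e * det2 gn gm -> 0 < e * det2 ga gm -> 0 < e * det2 gb gm ->
  0 < e * det2 ga gn -> 0 < e * det2 gb gn -> 0 < e * det2 gb ga ->
  1 < det2 ga gm * det2 gb gn / (det2 ga gn * det2 gb gm).
Proof.
  intros Hnm Ham Hbm Han Hbn Hba.
  assert (Hden : 0 < det2 ga gn * det2 gb gm) by nra.
  assert (Hnum : det2 ga gm * det2 gb gn - det2 ga gn * det2 gb gm = det2 gb ga * det2 gn gm)
    by (unfold det2; ring).
  apply (Rmult_lt_reg_r (det2 ga gn * det2 gb gm)); [exact Hden|].
  unfold Rdiv; rewrite Rmult_1_l, Rmult_assoc, Rinv_l by lra.
  nra.
Qed.

Lemma consecutive_angles_orientation (p q r s : R) :
  (p < q /\ q < r /\ r < s /\ s < p + 2 * PI) \/ (p > q /\ q > r /\ r > s /\ s > p - 2 * PI) ->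
  exists e, 0 < e * sin ((q - p) / 2) /\ 0 < e * sin ((r - p) / 2) /\
            0 < e * sin ((s - p) / 2) /\ 0 < e * sin ((r - q) / 2) /\
            0 < e * sin ((s - q) / 2) /\ 0 < e * sin ((s - r) / 2).
Proof.
  assert (Hsin : forall u v, 0 < v - u < 2 * PI ->
            0 < sin ((v - u) / 2) /\ sin ((u - v) / 2) < 0).
  { intros u v Huv.
    replace ((u - v) / 2) with (- ((v - u) / 2)) by field; rewrite sin_neg.
    assert (0 < sin ((v - u) / 2)) by (apply sin_gt_0; lra); lra. }
  intros [H | H]; [exists 1 | exists (-1)];
    repeat split; match goal with |- 0 < _ * sin ((?v - ?u) / 2) =>
      first [ pose proof (proj1 (Hsin u v ltac:(lra)))
            | pose proof (proj2 (Hsin v u ltac:(lra))) ]; lra end.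
Qed.

Lemma consecutive4_hdet_cross_ratio (m n a b : vec) :
  ideal m -> ideal n -> ideal a -> ideal b -> consecutive4 m n a b ->
  hdet m n <> 0 /\ hdet m a <> 0 /\ hdet m b <> 0 /\ hdet a b <> 0 /\
  1 < cross_ratio m n a b.
Proof.
  intros Hm Hn Ha Hb (p & q & r & s & Am & An & Aa & Ab & Horient).
  destruct (hcoord_at_angle m p Hm Am) as (lm & Hlm & Em).
  destruct (hcoord_at_angle n q Hn An) as (ln & Hln & En).
  destruct (hcoord_at_angle a r Ha Aa) as (la & Hla & Ea).
  destruct (hcoord_at_angle b s Hb Ab) as (lb & Hlb & Eb).
  destruct (consecutive_angles_orientation p q r s Horient)
    as (e & Hnm & Ham & Hbm & Han & Hbn & Hba).
  rewrite <- !det2_angle_coord in Hnm, Ham, Hbm, Han, Hbn, Hba.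
  pose proof (det2_cyclic_cross_gt1 _ _ _ _ e Hnm Ham Hbm Han Hbn Hba) as Hcross.
  unfold hdet, cross_ratio; cbv zeta; rewrite Em, En, Ea, Eb, !det2_pscale.
  assert (Hne : forall l l' g g', l <> 0 -> l' <> 0 -> 0 < e * det2 g' g -> l * l' * det2 g g' <> 0).
  { intros l l' g g' Hl Hl' Hg; rewrite det2_anti.
    repeat apply Rmult_integral_contrapositive_currified; [assumption .. | nra]. }
  assert (Hscale : forall A B C D, C <> 0 -> D <> 0 ->
            la * lm * A * (lb * ln * B) / (la * ln * C * (lb * lm * D)) = A * B / (C * D))
    by (intros; field; repeat split; assumption).
  repeat split; [apply Hne; assumption .. |].
  rewrite Hscale; [exact Hcross | intros Z; rewrite Z in Han | intros Z; rewrite Z in Hbm]; lra.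
Qed.

(* [cosh] of the distance between the lines with ends at affine coordinates [ta, tb] and [tc, td]. *)
Definition ends_cosh (ta tb tc td : R) : R :=
  1 + 2 * ((ta - td) * (tb - tc)) / ((ta - tb) * (tc - td)).

Section AffineCoordinate.

Variables m n : vec.

Definition tcoord (x : vec) : R := hdet x n / hdet m x.

(* No side conditions: both sides fall back to the junk value [0] together. *)
Lemma cross_ratio_tcoord (x y : vec) : cross_ratio m n x y = tcoord y / tcoord x.
Proof.
  unfold cross_ratio, tcoord; cbv zeta; fold (hdet x m) (hdet y n) (hdet x n) (hdet y m).
  rewrite (hdet_anti x m), (hdet_anti y m).
  unfold Rdiv; rewrite !Rinv_mult, Rinv_inv, !Rinv_opp; ring.
Qed.

Hypotheses (Hm : ideal m) (Hn : ideal n) (Hmn : hdet m n <> 0).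

Lemma hdet_tcoord (x y : vec) : hdet m x <> 0 -> hdet m y <> 0 ->
  hdet x y = hdet m x * hdet m y * (tcoord x - tcoord y) / hdet m n.
Proof.
  intros Hx Hy; apply (Rmult_eq_reg_r (hdet m n)); [|exact Hmn].
  transitivity (hdet m y * hdet x n - hdet m x * hdet y n); [apply det2_plucker|].
  unfold tcoord; field; auto.
Qed.

Lemma bil_ideal_axis_polar (x : vec) : ideal x -> hdet m x <> 0 ->
  exists mu, 0 < mu /\ bil x (polar_vec (hcoord m) (hcoord n)) = - (mu * tcoord x).
Proof.
  intros Hx Hmx; destruct (bil_ideal_polar x (hcoord m) (hcoord n) Hx) as (mu & Hmu & E).
  exists (2 * mu * hdet m x ^ 2); split; [pose proof (pow2_pos _ Hmx); nra|].
  rewrite E; fold (hdet m x) (hdet n x); rewrite (hdet_anti n x); unfold tcoord; field; exact Hmx.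
Qed.

Lemma tcoord_sign_of_Hplus (x y : vec) (l : R) :
  ideal x -> ideal y -> hdet x y <> 0 -> hdet m x <> 0 ->
  line_in_Hplus (vscale l (polar_vec (hcoord m) (hcoord n))) x y -> l * tcoord x <= 0.
Proof.
  intros Hx Hy Hxy Hmx H.
  pose proof (line_in_Hplus_terminal _ x y Hx Hy (bil_ideal_pos x y Hx Hy Hxy) H) as G.
  destruct (bil_ideal_axis_polar x Hx Hmx) as (mu & Hmu & E).
  rewrite bil_scale_r, E in G.
  assert (mu * (l * tcoord x) <= 0) by lra.
  destruct (Rle_lt_dec (l * tcoord x) 0) as [|Hpos]; [assumption|].
  pose proof (Rmult_lt_0_compat _ _ Hmu Hpos); lra.
Qed.

Lemma opposite_sides_tcoord (a b c d nu : vec) :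
  ideal a -> ideal b -> ideal c -> ideal d -> hdet a b <> 0 -> hdet c d <> 0 ->
  hdet m a <> 0 -> hdet m c <> 0 -> tcoord a <> 0 -> tcoord c <> 0 ->
  orth_to_line nu m n -> sq nu < 0 ->
  line_in_Hplus nu a b -> line_in_Hplus (vscale (-1) nu) c d ->
  tcoord a * tcoord c < 0.
Proof.
  intros Ha Hb Hc Hd Hab Hcd Hma Hmc Ta Tc Hnu Snu Lab Lcd.
  destruct (orth_ideals_polar nu m n Hm Hn Hmn Hnu) as (l & El).
  assert (Hl : l <> 0) by (intros ->; rewrite El, sq_scale in Snu; lra).
  rewrite El in Lab, Lcd; replace (vscale (-1) (vscale l _)) with
    (vscale (- l) (polar_vec (hcoord m) (hcoord n))) in Lcd
    by (apply vec_ext; unfold vscale; simpl; ring).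
  pose proof (tcoord_sign_of_Hplus a b l Ha Hb Hab Hma Lab) as Sa.
  pose proof (tcoord_sign_of_Hplus c d (- l) Hc Hd Hcd Hmc Lcd) as Sc.
  assert (Hl2 : 0 < l ^ 2) by (apply pow2_pos, Hl).
  assert (Hprod : l ^ 2 * (tcoord a * tcoord c) <= 0) by nra.
  assert (Hne : tcoord a * tcoord c <> 0) by (apply Rmult_integral_contrapositive_currified; assumption).
  destruct (Rlt_or_le (tcoord a * tcoord c) 0) as [|Hge]; [assumption|].
  destruct Hge as [Hgt | E]; [nra | symmetry in E; contradiction].
Qed.

Lemma unit_normal_sign (a b : vec) (l : R) :
  ideal a -> ideal b -> hdet m a <> 0 -> hdet m b <> 0 -> l <> 0 ->
  line_in_Hplus (vscale l (polar_vec (hcoord a) (hcoord b))) m n ->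
  0 < l * hdet m a * hdet m b.
Proof.
  intros Ha Hb Hma Hmb Hl H.
  pose proof (line_in_Hplus_terminal _ m n Hm Hn (bil_ideal_pos m n Hm Hn Hmn) H) as G.
  destruct (bil_ideal_polar m (hcoord a) (hcoord b) Hm) as (mu & Hmu & E).
  rewrite bil_scale_r, E in G; fold (hdet a m) (hdet b m) in G.
  rewrite (hdet_anti a m), (hdet_anti b m) in G.
  assert (Hne : l * hdet m a * hdet m b <> 0)
    by (repeat apply Rmult_integral_contrapositive_currified; assumption).
  assert (0 <= mu * (l * hdet m a * hdet m b)) by (apply Rge_le; ring_simplify in G; ring_simplify; nra).
  destruct (Rlt_or_le 0 (l * hdet m a * hdet m b)) as [|Hle]; [assumption|].
  destruct Hle as [Hlt | E0]; [nra | contradiction].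
Qed.

Lemma bil_unit_normals (a b c d delta1 delta2 : vec) :
  ideal a -> ideal b -> ideal c -> ideal d -> hdet a b <> 0 -> hdet c d <> 0 ->
  hdet m a <> 0 -> hdet m b <> 0 -> hdet m c <> 0 -> hdet m d <> 0 ->
  0 < (tcoord a - tcoord b) * (tcoord c - tcoord d) ->
  sq delta1 = -2 -> orth_to_line delta1 a b -> line_in_Hplus delta1 m n ->
  sq delta2 = -2 -> orth_to_line delta2 c d -> line_in_Hplus delta2 m n ->
  bil delta1 delta2 = 2 * ends_cosh (tcoord a) (tcoord b) (tcoord c) (tcoord d).
Proof.
  intros Ha Hb Hc Hd Hab Hcd Hma Hmb Hmc Hmd HP S1 O1 L1 S2 O2 L2.
  destruct (unit_normal_polar a b delta1 Ha Hb Hab S1 O1) as (l1 & E1 & U1).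
  destruct (unit_normal_polar c d delta2 Hc Hd Hcd S2 O2) as (l2 & E2 & U2).
  assert (Hl1 : l1 <> 0) by (intros ->; lra).
  assert (Hl2 : l2 <> 0) by (intros ->; lra).
  rewrite E1 in L1; rewrite E2 in L2.
  pose proof (unit_normal_sign a b l1 Ha Hb Hma Hmb Hl1 L1) as P1.
  pose proof (unit_normal_sign c d l2 Hc Hd Hmc Hmd Hl2 L2) as P2.
  (* The signs fixed by the half-planes of [delta_i] make the two unit-normal factors agree. *)
  assert (Hu : l1 * hdet a b * (l2 * hdet c d) = 2).
  { assert (Hpos : 0 < l1 * hdet a b * (l2 * hdet c d)).
    { replace (l1 * hdet a b * (l2 * hdet c d)) with
        (l1 * hdet m a * hdet m b * (l2 * hdet m c * hdet m d)
         * ((tcoord a - tcoord b) * (tcoord c - tcoord d)) / hdet m n ^ 2)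
        by (rewrite (hdet_tcoord a b), (hdet_tcoord c d) by assumption; field; exact Hmn).
      apply Rdiv_lt_0_compat; [|apply pow2_pos, Hmn].
      apply Rmult_lt_0_compat; [apply Rmult_lt_0_compat|]; assumption. }
    assert (Hsq : (l1 * hdet a b * (l2 * hdet c d)) ^ 2 = 4)
      by (rewrite Rpow_mult_distr, U1, U2; ring).
    clear - Hpos Hsq; nra. }
  assert (tcoord a - tcoord b <> 0 /\ tcoord c - tcoord d <> 0) as []
    by (split; intros Z; rewrite Z in HP; lra).
  rewrite E1, E2, bil_scale_l, bil_scale_r, bil_polar_polar, <- Hu.
  fold (hdet a c) (hdet b d) (hdet a d) (hdet b c).
  rewrite (hdet_tcoord a b), (hdet_tcoord c d), (hdet_tcoord a c), (hdet_tcoord b d),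
    (hdet_tcoord a d), (hdet_tcoord b c) by assumption.
  unfold ends_cosh; field; auto.
Qed.

(* [c'] is the mirror image of [c] in the axis, which in this coordinate is [t -> -t]. *)
Lemma tcoord_other_terminal (c c' : vec) :
  ideal c -> hdet m c <> 0 -> other_terminal_orth m n c c' -> tcoord c' = - tcoord c.
Proof.
  intros Hc Hmc (Hc' & Hnot & n1 & n2 & Hn1 & Hn2 & O1 & O2 & B12).
  assert (Hcc' : hdet c c' <> 0).
  { intros Z; destruct (hdet_eq0_collinear c c' Hc Hc' Z) as (k & Ek); exact (Hnot k Ek). }
  destruct (orth_ideals_polar n1 c c' Hc Hc' Hcc' O1) as (k1 & E1).
  destruct (orth_ideals_polar n2 m n Hm Hn Hmn O2) as (k2 & E2).
  assert (Hk1 : k1 <> 0) by (intros ->; apply Hn1; rewrite E1; apply vec_ext; simpl; ring).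
  assert (Hk2 : k2 <> 0) by (intros ->; apply Hn2; rewrite E2; apply vec_ext; simpl; ring).
  rewrite E1, E2, bil_scale_l, bil_scale_r, bil_polar_polar in B12.
  fold (hdet c m) (hdet c' n) (hdet c n) (hdet c' m) in B12.
  rewrite (hdet_anti c m), (hdet_anti c' m) in B12.
  assert (Rel : hdet m c * hdet c' n + hdet c n * hdet m c' = 0).
  { apply Rmult_integral in B12 as [B | B]; [contradiction|].
    apply Rmult_integral in B as [B | B]; [contradiction | lra]. }
  assert (Hmc' : hdet m c' <> 0).
  { intros Z; rewrite Z in Rel.
    assert (Z' : hdet c' n = 0).
    { apply (Rmult_eq_reg_l (hdet m c)); [lra | exact Hmc]. }
    exact (hcoord_neq0 c' Hc' (det2_eq0_both _ _ _ Z Z' Hmn)). }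
  unfold tcoord; apply (Rmult_eq_reg_r (hdet m c * hdet m c'));
    [|apply Rmult_integral_contrapositive_currified; assumption].
  field_simplify; [lra | assumption ..].
Qed.

End AffineCoordinate.

Lemma ratio_gt1_neq0 (x y : R) : 1 < y / x -> x <> 0 /\ y <> 0.
Proof.
  intros H; split; intros ->; unfold Rdiv in H; rewrite ?Rinv_0, ?Rmult_0_r, ?Rmult_0_l in H; lra.
Qed.

Lemma ratio_gt1 (x y : R) : 1 < y / x -> 0 < x * (y - x).
Proof.
  intros H; destruct (ratio_gt1_neq0 x y H) as [Hx _].
  replace (x * (y - x)) with (x ^ 2 * (y / x - 1)) by (field; exact Hx).
  apply Rmult_lt_0_compat; [apply pow2_pos, Hx | lra].
Qed.

Lemma ends_cosh_gt1 (ta tb tc td : R) :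
  1 < tb / ta -> 1 < tc / td -> ta * tc < 0 ->
  0 < (ta - tb) * (tc - td) /\ 1 < ends_cosh ta tb tc td.
Proof.
  intros Hab%ratio_gt1 Hdc%ratio_gt1 Hac.
  assert (Signs : 0 < (ta - tb) * (tc - td) /\ 0 < (ta - td) * (tb - tc)).
  { destruct (Rlt_or_le 0 ta) as [Ha | Ha].
    - assert (ta < tb) by nra; assert (tc < 0) by nra.
      assert (td < 0 /\ tc < td) as [] by (destruct (Rlt_or_le 0 td); [nra | split; nra]).
      split; [apply Rmult_neg_neg | apply Rmult_lt_0_compat]; lra.
    - assert (ta < 0) by (destruct Ha; [assumption | subst; lra]).
      assert (tb < ta) by nra; assert (0 < tc) by nra.
      assert (0 < td /\ td < tc) as [] by (destruct (Rlt_or_le td 0); [nra | split; nra]).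
      split; [apply Rmult_lt_0_compat | apply Rmult_neg_neg]; lra. }
  destruct Signs as [HP HQ]; split; [exact HP|].
  unfold ends_cosh; assert (0 < (ta - td) * (tb - tc) / ((ta - tb) * (tc - td)))
    by (apply Rdiv_lt_0_compat; assumption).
  unfold Rdiv in *; lra.
Qed.

Lemma cosh_ln_identity (X1 X2 Y : R) :
  0 < X1 -> 0 < X2 -> 0 < Y -> X1 <> 1 -> X2 <> 1 ->
  4 * (cosh ((ln X1 + ln Y) / 2) * cosh ((ln X2 - ln Y) / 2)) / (sinh (ln X1 / 2) * sinh (ln X2 / 2))
  = 4 * (X1 * Y + 1) * (X2 + Y) / (Y * (X1 - 1) * (X2 - 1)).
Proof.
  intros H1 H2 HY N1 N2.
  assert (Half : forall X, 0 < X -> exp (ln X / 2) * exp (ln X / 2) = X).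
  { intros X HX; rewrite <- exp_plus; replace (ln X / 2 + ln X / 2) with (ln X) by field.
    apply exp_ln, HX. }
  unfold cosh, sinh.
  replace ((ln X1 + ln Y) / 2) with (ln X1 / 2 + ln Y / 2) by field.
  replace ((ln X2 - ln Y) / 2) with (ln X2 / 2 + - (ln Y / 2)) by field.
  rewrite !exp_Ropp, !exp_plus, exp_Ropp.
  set (p := exp (ln X1 / 2)); set (q := exp (ln X2 / 2)); set (r := exp (ln Y / 2)).
  assert (0 < p /\ 0 < q /\ 0 < r) as (Hp & Hq & Hr) by (repeat split; apply exp_pos).
  rewrite <- (Half X1 H1), <- (Half X2 H2), <- (Half Y HY); fold p q r.
  assert (p * p - 1 <> 0) by (intros Z; apply N1; rewrite <- (Half X1 H1); fold p; lra).
  assert (q * q - 1 <> 0) by (intros Z; apply N2; rewrite <- (Half X2 H2); fold q; lra).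
  assert (p - / p <> 0) by (intros Z; replace (p * p - 1) with (p * (p - / p)) in * by (field; lra);
                            rewrite Z in *; lra).
  assert (q - / q <> 0) by (intros Z; replace (q * q - 1) with (q * (q - / q)) in * by (field; lra);
                            rewrite Z in *; lra).
  field; repeat split; lra.
Qed.

Lemma ends_cosh_theta (ta tb tc td : R) :
  1 < tb / ta -> 1 < tc / td -> ta * tc < 0 ->
  2 * ends_cosh ta tb tc td =
  4 * (cosh ((ln (tb / ta) + ln (- tc / tb)) / 2) * cosh ((ln (tc / td) - ln (- tc / tb)) / 2))
    / (sinh (ln (tb / ta) / 2) * sinh (ln (tc / td) / 2)) - 2.
Proof.
  intros Hab Hdc Hac.
  pose proof (ratio_gt1 _ _ Hab); pose proof (ratio_gt1 _ _ Hdc).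
  destruct (ends_cosh_gt1 ta tb tc td Hab Hdc Hac) as [HP _].
  assert (Hne : ta <> 0 /\ tb <> 0 /\ tc <> 0 /\ td <> 0 /\ ta - tb <> 0 /\ tc - td <> 0)
    by (repeat split; intros Z; rewrite Z in *; nra).
  destruct Hne as (Ha & Hb & Hc & Hd & Hab' & Hcd').
  assert (HY : 0 < - tc / tb)
    by (replace (- tc / tb) with (- (ta * tc) / (ta * tb)) by (field; auto);
        apply Rdiv_lt_0_compat; nra).
  rewrite cosh_ln_identity by (try lra; intros E; rewrite E in *; lra).
  unfold ends_cosh; field; repeat split; try assumption.
  intros Z; apply Hab'; lra.
Qed.

Theorem lemma8p1p4 (m n a b c d nu delta1 delta2 c' : vec) :
  ideal m -> ideal n -> ideal a -> ideal b -> ideal c -> ideal d ->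
  (* (AB) and (CD) lie in different (closed) half-planes bounded by l = (MN) *)
  orth_to_line nu m n -> sq nu < 0 ->
  line_in_Hplus nu a b -> line_in_Hplus (vscale (-1) nu) c d ->
  consecutive4 m n a b -> consecutive4 m n d c ->
  (* delta_1, delta_2 *)
  sq delta1 = -2 -> orth_to_line delta1 a b -> line_in_Hplus delta1 m n ->
  sq delta2 = -2 -> orth_to_line delta2 c d -> line_in_Hplus delta2 m n ->
  (* C' : theta(B,C) = theta(B,C') *)
  other_terminal_orth m n c c' ->
  let theta1 := theta m n a b in
  let theta2 := theta m n d c in
  let theta12 := theta m n b c' in
  exists rho : R, lines_dist_is a b c d rho /\
    bil delta1 delta2 = 2 * cosh rho /\
    2 * cosh rho =
      4 * (cosh ((theta1 + theta12) / 2) * cosh ((theta2 - theta12) / 2))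
        / (sinh (theta1 / 2) * sinh (theta2 / 2)) - 2.
Proof.
  intros Hm Hn Ha Hb Hc Hd Hnu Snu Lab Lcd Cab Cdc S1 O1 L1 S2 O2 L2 Hc' theta1 theta2 theta12.
  destruct (consecutive4_hdet_cross_ratio m n a b Hm Hn Ha Hb Cab)
    as (Hmn & Hma & Hmb & Hab & Xab).
  destruct (consecutive4_hdet_cross_ratio m n d c Hm Hn Hd Hc Cdc)
    as (_ & Hmd & Hmc & Hdc & Xdc).
  rewrite cross_ratio_tcoord in Xab, Xdc.
  assert (Hcd : hdet c d <> 0) by (rewrite hdet_anti; intros Z; apply Hdc; lra).
  assert (Hac : tcoord m n a * tcoord m n c < 0).
  { apply (opposite_sides_tcoord m n Hm Hn Hmn a b c d nu); try assumption.
    - exact (proj1 (ratio_gt1_neq0 _ _ Xab)).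
    - exact (proj2 (ratio_gt1_neq0 _ _ Xdc)). }
  destruct (ends_cosh_gt1 _ _ _ _ Xab Xdc Hac) as [HP HC].
  destruct (acosh_exists _ HC) as (rho & Hrho & Ecosh).
  assert (Hbil : bil delta1 delta2 = 2 * cosh rho)
    by (rewrite Ecosh; apply (bil_unit_normals m n Hm Hn Hmn); assumption).
  exists rho; split; [|split; [exact Hbil|]].
  - apply (lines_dist_of_unit_normals a b c d delta1 delta2); assumption.
  - unfold theta1, theta2, theta12, theta.
    rewrite !cross_ratio_tcoord, (tcoord_other_terminal m n Hm Hn Hmn c c' Hc Hmc Hc'), Ecosh.
    apply ends_cosh_theta; assumption.
Qed.
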